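(* Let $S^0$ be an adequate semigroup with semilattice of idempotents $E^0$, let $I=\bigcup_{x\in E^0}L_x$ be a left normal band and $\Lambda=\bigcup_{x\in E^0}R_x$ a right normal band with $E^0$ as a common semilattice transversal. Let $W=\{(e,x,f)\in I\times S^0\times\Lambda: e\in L_{x^+},\ f\in R_{x^\ast}\}$ with multiplication $(e,x,f)(g,y,h)=(e(xy)^+,\,xy,\,(xy)^\ast h)$. Then $W$ is a quasi-adequate semigroup with a quasi-ideal, admissible adequate transversal isomorphic to $S^0$. Conversely, every quasi-adequate semigroup with a quasi-ideal, admissible adequate transversal can be constructed (up to isomorphism) in this way.
   Context: For a semigroup $S$, $S^1$ is $S$ with an identity adjoined, $E(S)$ its idempotents, $\mathcal{L},\mathcal{R}$ Green's relations. $\mathcal{R}^\ast=\{(a,b):\forall x,y\in S^1,\ xa=ya\iff xb=yb\}$, $\mathcal{L}^\ast=\{(a,b):\forall x,y\in S^1,\ ax=ay\iff bx=by\}$. $S$ is abundant if every $\mathcal{R}^\ast$- and $\mathcal{L}^\ast$-class contains an idempotent; adequate if moreover idempotents commute, and then $a^+$ ($a^\ast$) is the unique idempotent $\mathcal{R}^\ast$- ($\mathcal{L}^\ast$-) related to $a$. An abundant subsemigroup $U$ of abundant $S$ is a $\ast$-subsemigroup if $\mathcal{L}^\ast(U)=\mathcal{L}^\ast(S)\cap(U\times U)$ and $\mathcal{R}^\ast(U)=\mathcal{R}^\ast(S)\cap(U\times U)$. An adequate $\ast$-subsemigroup $S^0$ of abundant $S$ is an adequate transversal if each $x\in S$ has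 a unique $\overline{x}\in S^0$ and idempotents $e,f$ with $x=e\overline{x}f$, $e\,\mathcal{L}\,\overline{x}^+$, $f\,\mathcal{R}\,\overline{x}^\ast$. Quasi-adequate: abundant with $E(S)$ a subsemigroup. The transversal is admissible if $\overline{xy}=\overline{x}\,\overline{y}$ for all $x,y\in S$, and a quasi-ideal if $S^0SS^0\subseteq S^0$. A left normal band satisfies $xyz=xzy$, a right normal band $xyz=yxz$. $E^0$ is a semilattice transversal of a band $B$ if it is a subsemilattice of $B$ and each element of $B$ has exactly one inverse in $E^0$; common means this holds in both $I$ and $\Lambda$. For $x\in E^0$, $L_x$ is the $\mathcal{L}$-class of $x$ in $I$ and $R_x$ the $\mathcal{R}$-class of $x$ in $\Lambda$. *)

(* Semigroups are given by a type,
   a binary operation and a carrier predicate; all notions are relative to the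
   carrier, so that subsemigroups (e.g. a transversal S^0 inside S) are handled
   uniformly. *)
Set Implicit Arguments.

Definition full (T : Type) : T -> Prop := fun _ => True.
Arguments full T _ : clear implicits.

Section Semigroups.
Variable T : Type.
Variable mul : T -> T -> T.


(* elements of S^1 : None is the adjoined identity *)
Definition one_ok (A : T -> Prop) (u : option T) : Prop :=
  match u with None => True | Some x => A x end.
Definition lact (u : option T) (a : T) : T :=
  match u with None => a | Some x => mul x a end.
Definition ract (a : T) (u : option T) : T :=
  match u with None => a | Some x => mul a x end.

Definition semigroup (A : T -> Prop) : Prop :=
  (forall x y, A x -> A y -> A (mul x y)) /\
  (forall x y z, A x -> A y -> A z -> mul (mul x y) z = mul x (mul y z)).

Definition idem (A : T -> Prop) (e : T) : Prop := A e /\ mul e e = e.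

Definition Rstar (A : T -> Prop) (a b : T) : Prop :=
  forall u v, one_ok A u -> one_ok A v ->
    (lact u a = lact v a <-> lact u b = lact v b).
Definition Lstar (A : T -> Prop) (a b : T) : Prop :=
  forall u v, one_ok A u -> one_ok A v ->
    (ract a u = ract a v <-> ract b u = ract b v).

Definition GreenL (A : T -> Prop) (a b : T) : Prop :=
  exists u v, one_ok A u /\ one_ok A v /\ a = lact u b /\ b = lact v a.
Definition GreenR (A : T -> Prop) (a b : T) : Prop :=
  exists u v, one_ok A u /\ one_ok A v /\ a = ract b u /\ b = ract a v.

Definition abundant (A : T -> Prop) : Prop :=
  semigroup A /\
  forall a, A a ->
    (exists e, idem A e /\ Rstar A a e) /\ (exists f, idem A f /\ Lstar A a f).

Definition adequate (A : T -> Prop) : Prop :=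
  abundant A /\
  forall e f, idem A e -> idem A f -> mul e f = mul f e.

Definition quasi_adequate (A : T -> Prop) : Prop :=
  abundant A /\
  forall e f, idem A e -> idem A f -> idem A (mul e f).

Definition star_subsemigroup (A U : T -> Prop) : Prop :=
  (forall x, U x -> A x) /\ abundant U /\
  forall a b, U a -> U b ->
    (Lstar U a b <-> Lstar A a b) /\ (Rstar U a b <-> Rstar A a b).

(* bar_rel A U x xb : xb in U and x = e xb f with e, f idempotents of A,
   e L xb^+ and f R xb^* (xb^+, xb^* the idempotents of U that are
   R*- resp. L*-related to xb in U; unique since U is adequate). *)
Definition bar_rel (A U : T -> Prop) (x xb : T) : Prop :=
  U xb /\
  exists e f, idem A e /\ idem A f /\ x = mul (mul e xb) f /\
    (exists p, idem U p /\ Rstar U xb p /\ GreenL A e p) /\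
    (exists q, idem U q /\ Lstar U xb q /\ GreenR A f q).

Definition adequate_transversal (A U : T -> Prop) : Prop :=
  adequate U /\ star_subsemigroup A U /\
  forall x, A x -> exists! xb, bar_rel A U x xb.

Definition admissible (A U : T -> Prop) : Prop :=
  forall x y xb yb, A x -> A y -> bar_rel A U x xb -> bar_rel A U y yb ->
    bar_rel A U (mul x y) (mul xb yb).

Definition quasi_ideal (A U : T -> Prop) : Prop :=
  forall a s b, U a -> A s -> U b -> U (mul (mul a s) b).

Definition band : Prop := semigroup (full T) /\ forall x, mul x x = x.
Definition left_normal_band : Prop :=
  band /\ forall x y z, mul (mul x y) z = mul (mul x z) y.
Definition right_normal_band : Prop :=
  band /\ forall x y z, mul (mul x y) z = mul (mul y x) z.

Definition inverse (a b : T) : Prop :=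
  mul (mul a b) a = a /\ mul (mul b a) b = b.

End Semigroups.

Definition iso (T1 T2 : Type) (mul1 : T1 -> T1 -> T1) (A : T1 -> Prop)
  (mul2 : T2 -> T2 -> T2) (B : T2 -> Prop) : Prop :=
  exists phi : T1 -> T2,
    (forall x, A x -> B (phi x)) /\
    (forall x y, A x -> A y -> phi x = phi y -> x = y) /\
    (forall y, B y -> exists x, A x /\ phi x = y) /\
    (forall x y, A x -> A y -> phi (mul1 x y) = mul2 (phi x) (phi y)).

(* S^0 is the whole type T0 (adequate);
   plus/star are the (unique) maps x |-> x^+, x |-> x^*.  The band I
   (type TI) and Lambda (type TL) contain E^0 via the maps jI, jL, which are
   injective semigroup homomorphisms on E^0 (so E^0 is the same
   subsemilattice of I and of Lambda). *)
Definition W_hyp (T0 : Type) (mul0 : T0 -> T0 -> T0) (plus star : T0 -> T0)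
  (TI : Type) (mulI : TI -> TI -> TI) (jI : T0 -> TI)
  (TL : Type) (mulL : TL -> TL -> TL) (jL : T0 -> TL) : Prop :=
  adequate mul0 (full T0) /\
  (forall x, idem mul0 (full T0) (plus x) /\ Rstar mul0 (full T0) x (plus x)) /\
  (forall x, idem mul0 (full T0) (star x) /\ Lstar mul0 (full T0) x (star x)) /\
  left_normal_band mulI /\ right_normal_band mulL /\
  (forall e f, idem mul0 (full T0) e -> idem mul0 (full T0) f ->
     jI (mul0 e f) = mulI (jI e) (jI f)) /\
  (forall e f, idem mul0 (full T0) e -> idem mul0 (full T0) f ->
     jI e = jI f -> e = f) /\
  (forall e f, idem mul0 (full T0) e -> idem mul0 (full T0) f ->
     jL (mul0 e f) = mulL (jL e) (jL f)) /\
  (forall e f, idem mul0 (full T0) e -> idem mul0 (full T0) f ->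
     jL e = jL f -> e = f) /\
  (* E^0 is a semilattice transversal of I and of Lambda *)
  (forall a : TI, exists e, idem mul0 (full T0) e /\ inverse mulI a (jI e) /\
     forall e', idem mul0 (full T0) e' -> inverse mulI a (jI e') -> e' = e) /\
  (forall a : TL, exists e, idem mul0 (full T0) e /\ inverse mulL a (jL e) /\
     forall e', idem mul0 (full T0) e' -> inverse mulL a (jL e') -> e' = e) /\
  (* I = union of L_x (x in E^0), Lambda = union of R_x (x in E^0) *)
  (forall a : TI, exists e, idem mul0 (full T0) e /\ GreenL mulI (full TI) a (jI e)) /\
  (forall a : TL, exists e, idem mul0 (full T0) e /\ GreenR mulL (full TL) a (jL e)).

Definition W_carrier (T0 : Type) (plus star : T0 -> T0)
  (TI : Type) (mulI : TI -> TI -> TI) (jI : T0 -> TI)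
  (TL : Type) (mulL : TL -> TL -> TL) (jL : T0 -> TL)
  (w : TI * T0 * TL) : Prop :=
  let '(e, x, f) := w in
  GreenL mulI (full TI) e (jI (plus x)) /\ GreenR mulL (full TL) f (jL (star x)).

Definition W_mul (T0 : Type) (mul0 : T0 -> T0 -> T0) (plus star : T0 -> T0)
  (TI : Type) (mulI : TI -> TI -> TI) (jI : T0 -> TI)
  (TL : Type) (mulL : TL -> TL -> TL) (jL : T0 -> TL)
  (w1 w2 : TI * T0 * TL) : TI * T0 * TL :=
  let '(e, x, _) := w1 in
  let '(_, y, h) := w2 in
  (mulI e (jI (plus (mul0 x y))), mul0 x y, mulL (jL (star (mul0 x y))) h).

(* In W the triple (e, x, f) is R*-related to the idempotent (e, x^+, x^+) and
   L*-related to (x^*, x^*, f): multiplication acts on the middle coordinate as in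
   S^0, while e and f only record an L-class of I and an R-class of Lambda.  So W is
   abundant with a band of idempotents, and x |-> (x^+, x, x^* ) embeds S^0 as an
   adequate transversal, the bar of (e, x, f) being (x^+, x, x^* ); it is admissible
   and, since (x s y)^+ <= x^+ and (x s y)^* <= y^*, a quasi-ideal.

   Conversely, for a quasi-ideal admissible adequate transversal S^0 of S, let I be
   the idempotents L-related to an idempotent of S^0, multiplied by a * b := a b°
   with b° that idempotent, and dually Lambda.  Every x is uniquely e x̄ f with e in
   I and f in Lambda, and x |-> (e, x̄, f) is an isomorphism onto W; multiplicativity
   rests on x̄ f_x e_y ȳ = x̄ ȳ, which is where the quasi-ideal and admissibility
   hypotheses enter. *)

From Stdlib Require Import ProofIrrelevance ClassicalEpsilon.
Set Implicit Arguments.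

(** * R*, L* and Green's relations *)

Lemma one_ok_full (X : Type) (u : option X) : one_ok (full X) u.
Proof. destruct u; exact I. Qed.

Lemma one_ok_map (X Y : Type) (A : X -> Prop) (B : Y -> Prop) (g : X -> Y) u :
  (forall x, A x -> B (g x)) -> one_ok A u -> one_ok B (option_map g u).
Proof. destruct u; simpl; auto. Qed.
Arguments one_ok_map {X Y A B g u} _ _.

Section Semigroup.
Variable T : Type.
Variable mul : T -> T -> T.
Variable A : T -> Prop.

Lemma Rstar_refl a : Rstar mul A a a.
Proof. intros u v _ _; reflexivity. Qed.
Lemma Lstar_refl a : Lstar mul A a a.
Proof. intros u v _ _; reflexivity. Qed.

Lemma Rstar_sym a b : Rstar mul A a b -> Rstar mul A b a.
Proof. intros H u v Hu Hv; symmetry; exact (H u v Hu Hv). Qed.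
Lemma Lstar_sym a b : Lstar mul A a b -> Lstar mul A b a.
Proof. intros H u v Hu Hv; symmetry; exact (H u v Hu Hv). Qed.

Lemma Rstar_trans a b c : Rstar mul A a b -> Rstar mul A b c -> Rstar mul A a c.
Proof. intros H1 H2 u v Hu Hv; rewrite (H1 u v Hu Hv); exact (H2 u v Hu Hv). Qed.
Lemma Lstar_trans a b c : Lstar mul A a b -> Lstar mul A b c -> Lstar mul A a c.
Proof. intros H1 H2 u v Hu Hv; rewrite (H1 u v Hu Hv); exact (H2 u v Hu Hv). Qed.

Lemma Rstar_sub (B : T -> Prop) a b :
  (forall x, B x -> A x) -> Rstar mul A a b -> Rstar mul B a b.
Proof. intros HB H u v Hu Hv; apply H; [destruct u | destruct v]; simpl in *; auto. Qed.
Lemma Lstar_sub (B : T -> Prop) a b :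
  (forall x, B x -> A x) -> Lstar mul A a b -> Lstar mul B a b.
Proof. intros HB H u v Hu Hv; apply H; [destruct u | destruct v]; simpl in *; auto. Qed.

Lemma Rstar_idem_mul a e : A e -> mul e e = e -> Rstar mul A a e -> mul e a = a.
Proof. intros He Hee H; apply (H (Some e) None He I); exact Hee. Qed.
Lemma Lstar_idem_mul a f : A f -> mul f f = f -> Lstar mul A a f -> mul a f = a.
Proof. intros Hf Hff H; apply (H (Some f) None Hf I); exact Hff. Qed.

Lemma Rstar_idem_eq e f : A e -> A f -> mul e e = e -> mul f f = f ->
  mul e f = mul f e -> Rstar mul A e f -> e = f.
Proof.
  intros He Hf Hee Hff C H.
  rewrite <- (Rstar_idem_mul He Hee (Rstar_sym H)), C.
  symmetry; exact (Rstar_idem_mul Hf Hff H).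
Qed.
Lemma Lstar_idem_eq e f : A e -> A f -> mul e e = e -> mul f f = f ->
  mul e f = mul f e -> Lstar mul A e f -> e = f.
Proof.
  intros He Hf Hee Hff C H.
  rewrite <- (Lstar_idem_mul He Hee (Lstar_sym H)), <- C.
  symmetry; exact (Lstar_idem_mul Hf Hff H).
Qed.

Lemma GreenL_refl a : GreenL mul A a a.
Proof. exists None, None; simpl; auto. Qed.
Lemma GreenR_refl a : GreenR mul A a a.
Proof. exists None, None; simpl; auto. Qed.

Lemma GreenL_of_mul a b : A a -> A b -> mul a b = a -> mul b a = b -> GreenL mul A a b.
Proof. intros; exists (Some a), (Some b); simpl; auto. Qed.
Lemma GreenR_of_mul a b : A a -> A b -> mul b a = a -> mul a b = b -> GreenR mul A a b.
Proof. intros; exists (Some a), (Some b); simpl; auto. Qed.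

Hypothesis mulA : forall x y z, A x -> A y -> A z -> mul (mul x y) z = mul x (mul y z).
Hypothesis mul_closed : forall x y, A x -> A y -> A (mul x y).

Lemma lact_closed u a : one_ok A u -> A a -> A (lact mul u a).
Proof. destruct u; simpl; auto. Qed.
Lemma ract_closed u a : one_ok A u -> A a -> A (ract mul a u).
Proof. destruct u; simpl; auto. Qed.

Lemma lact_mul u a b : one_ok A u -> A a -> A b -> lact mul u (mul a b) = mul (lact mul u a) b.
Proof. destruct u; simpl; intros; [rewrite mulA|]; auto. Qed.
Lemma ract_mul u a b : one_ok A u -> A a -> A b -> ract mul (mul a b) u = mul a (ract mul b u).
Proof. destruct u; simpl; intros; [rewrite mulA|]; auto. Qed.

Lemma GreenL_idem_mul a b : A b -> mul b b = b -> GreenL mul A a b -> mul a b = a.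
Proof.
  intros Hb Hbb [u [v [Hu [_ [Ea _]]]]].
  rewrite Ea, <- lact_mul, Hbb; auto.
Qed.
Lemma GreenR_idem_mul a b : A b -> mul b b = b -> GreenR mul A a b -> mul b a = a.
Proof.
  intros Hb Hbb [u [v [Hu [_ [Ea _]]]]].
  rewrite Ea, <- ract_mul, Hbb; auto.
Qed.

Lemma GreenL_sym a b : GreenL mul A a b -> GreenL mul A b a.
Proof. intros [u [v [Hu [Hv [E1 E2]]]]]; exists v, u; auto. Qed.
Lemma GreenR_sym a b : GreenR mul A a b -> GreenR mul A b a.
Proof. intros [u [v [Hu [Hv [E1 E2]]]]]; exists v, u; auto. Qed.

Lemma GreenL_mulr a b c : A a -> A b -> A c -> GreenL mul A a b -> GreenL mul A (mul a c) (mul b c).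
Proof.
  intros Ha Hb Hc [u [v [Hu [Hv [E1 E2]]]]]; exists u, v.
  rewrite !lact_mul, <- E1, <- E2 by auto; auto.
Qed.
Lemma GreenR_mull a b c : A a -> A b -> A c -> GreenR mul A a b -> GreenR mul A (mul c a) (mul c b).
Proof.
  intros Ha Hb Hc [u [v [Hu [Hv [E1 E2]]]]]; exists u, v.
  rewrite !ract_mul, <- E1, <- E2 by auto; auto.
Qed.

Lemma GreenL_idem_eq a b : A a -> A b -> mul a a = a -> mul b b = b -> mul a b = mul b a ->
  GreenL mul A a b -> a = b.
Proof.
  intros Ha Hb Haa Hbb C H.
  rewrite <- (GreenL_idem_mul Hb Hbb H), C.
  exact (GreenL_idem_mul Ha Haa (GreenL_sym H)).
Qed.
Lemma GreenR_idem_eq a b : A a -> A b -> mul a a = a -> mul b b = b -> mul a b = mul b a ->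
  GreenR mul A a b -> a = b.
Proof.
  intros Ha Hb Haa Hbb C H.
  rewrite <- (GreenR_idem_mul Hb Hbb H), <- C.
  exact (GreenR_idem_mul Ha Haa (GreenR_sym H)).
Qed.

Lemma Rstar_mull z a b : A z -> A a -> A b -> Rstar mul A a b -> Rstar mul A (mul z a) (mul z b).
Proof.
  intros Hz Ha Hb H u v Hu Hv.
  rewrite !lact_mul by auto.
  apply (H (Some (lact mul u z)) (Some (lact mul v z))); apply lact_closed; auto.
Qed.
Lemma Lstar_mulr z a b : A z -> A a -> A b -> Lstar mul A a b -> Lstar mul A (mul a z) (mul b z).
Proof.
  intros Hz Ha Hb H u v Hu Hv.
  rewrite !ract_mul by auto.
  apply (H (Some (ract mul z u)) (Some (ract mul z v))); apply ract_closed; auto.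
Qed.

Lemma GreenL_idem_uniq e p p' : A e -> A p -> A p' -> mul e e = e -> mul p p = p ->
  mul p' p' = p' -> mul p p' = mul p' p -> GreenL mul A e p -> GreenL mul A e p' -> p = p'.
Proof.
  intros He Hp Hp' Hee Hpp Hpp' C G G'.
  pose proof (GreenL_idem_mul Hp Hpp G) as Eep.
  pose proof (GreenL_idem_mul He Hee (GreenL_sym G)) as Epe.
  pose proof (GreenL_idem_mul Hp' Hpp' G') as Eep'.
  pose proof (GreenL_idem_mul He Hee (GreenL_sym G')) as Ep'e.
  assert (Epp' : mul p p' = p) by (rewrite <- Epe at 1; rewrite mulA, Eep' by auto; exact Epe).
  assert (Ep'p : mul p' p = p') by (rewrite <- Ep'e at 1; rewrite mulA, Eep by auto; exact Ep'e).
  congruence.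
Qed.
Lemma GreenR_idem_uniq f q q' : A f -> A q -> A q' -> mul f f = f -> mul q q = q ->
  mul q' q' = q' -> mul q q' = mul q' q -> GreenR mul A f q -> GreenR mul A f q' -> q = q'.
Proof.
  intros Hf Hq Hq' Hff Hqq Hqq' C G G'.
  pose proof (GreenR_idem_mul Hq Hqq G) as Eqf.
  pose proof (GreenR_idem_mul Hf Hff (GreenR_sym G)) as Efq.
  pose proof (GreenR_idem_mul Hq' Hqq' G') as Eq'f.
  pose proof (GreenR_idem_mul Hf Hff (GreenR_sym G')) as Efq'.
  assert (Eq'q : mul q' q = q) by (rewrite <- Efq at 1; rewrite <- mulA, Eq'f by auto; exact Efq).
  assert (Eqq' : mul q q' = q') by (rewrite <- Efq' at 1; rewrite <- mulA, Eqf by auto; exact Efq').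
  congruence.
Qed.

Lemma Rstar_GreenL_idem_eq e e' p : A e -> A e' -> A p -> mul e e = e -> mul e' e' = e' ->
  mul p p = p -> Rstar mul A e e' -> GreenL mul A e p -> GreenL mul A e' p -> e = e'.
Proof.
  intros He He' Hp Hee Hee' Hpp R G G'.
  transitivity (mul e e'); [|exact (Rstar_idem_mul He Hee (Rstar_sym R))].
  rewrite <- (GreenL_idem_mul Hp Hpp G) at 2.
  rewrite mulA, (GreenL_idem_mul He' Hee' (GreenL_sym G')) by auto.
  symmetry; exact (GreenL_idem_mul Hp Hpp G).
Qed.
Lemma Lstar_GreenR_idem_eq f f' q : A f -> A f' -> A q -> mul f f = f -> mul f' f' = f' ->
  mul q q = q -> Lstar mul A f f' -> GreenR mul A f q -> GreenR mul A f' q -> f = f'.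
Proof.
  intros Hf Hf' Hq Hff Hff' Hqq L G G'.
  transitivity (mul f' f); [|exact (Lstar_idem_mul Hf Hff (Lstar_sym L))].
  rewrite <- (GreenR_idem_mul Hq Hqq G) at 2.
  rewrite <- mulA, (GreenR_idem_mul Hf' Hff' (GreenR_sym G')) by auto.
  symmetry; exact (GreenR_idem_mul Hq Hqq G).
Qed.
(* The uniqueness half of "E^0 is a semilattice transversal of I": in I the inverse
   laws for a and r read a r p = a and r p r = r, with p the idempotent of S^0 that
   is L-related to a. *)
Lemma GreenL_inverse_idem_eq a p r : A a -> A p -> A r -> mul r r = r ->
  mul p r = mul r p -> GreenL mul A a p -> mul (mul a r) p = a -> mul (mul r p) r = r -> r = p.
Proof.
  intros Ha Hp Hr Hrr C G E1 E2.
  assert (Erp : mul r p = r).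
  { transitivity (mul (mul r p) r); [|exact E2].
    rewrite mulA, C, <- mulA, Hrr by auto; reflexivity. }
  assert (Ear : mul a r = a) by (rewrite <- Erp, <- mulA by auto; exact E1).
  assert (Epr : mul p r = p).
  { destruct G as [u [v [_ [Hv [_ Epa]]]]].
    rewrite Epa at 1; rewrite <- lact_mul, Ear by auto; symmetry; exact Epa. }
  rewrite <- Erp, <- C; exact Epr.
Qed.
Lemma GreenR_inverse_idem_eq a q r : A a -> A q -> A r -> mul r r = r ->
  mul q r = mul r q -> GreenR mul A a q -> mul (mul q r) a = a -> mul (mul r q) r = r -> r = q.
Proof.
  intros Ha Hq Hr Hrr C G E1 E2.
  assert (Eqr : mul q r = r).
  { transitivity (mul (mul r q) r); [|exact E2].
    rewrite <- C, mulA, Hrr by auto; reflexivity. }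
  assert (Era : mul r a = a) by (rewrite <- Eqr; exact E1).
  assert (Erq : mul r q = q).
  { destruct G as [u [v [_ [Hv [_ Eqa]]]]].
    rewrite Eqa at 1; rewrite <- ract_mul, Era by auto; symmetry; exact Eqa. }
  rewrite <- Eqr, C; exact Erq.
Qed.
End Semigroup.

(** * Adequate semigroups *)

Section Adequate.
Variables (T0 : Type) (mul0 : T0 -> T0 -> T0) (plus star : T0 -> T0).
Hypothesis adeq : adequate mul0 (full T0).
Hypothesis plus_spec :
  forall x, idem mul0 (full T0) (plus x) /\ Rstar mul0 (full T0) x (plus x).
Hypothesis star_spec :
  forall x, idem mul0 (full T0) (star x) /\ Lstar mul0 (full T0) x (star x).

Lemma adequate_mulA x y z : mul0 (mul0 x y) z = mul0 x (mul0 y z).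
Proof. exact (proj2 (proj1 (proj1 adeq)) x y z I I I). Qed.

Lemma adequate_idem_comm e f : mul0 e e = e -> mul0 f f = f -> mul0 e f = mul0 f e.
Proof. intros He Hf; exact (proj2 adeq e f (conj I He) (conj I Hf)). Qed.

Let mulA := adequate_mulA.
Let idem_comm := adequate_idem_comm.

Lemma adequate_mul_idem e f : mul0 e e = e -> mul0 f f = f -> mul0 (mul0 e f) (mul0 e f) = mul0 e f.
Proof.
  intros He Hf.
  rewrite mulA, <- (mulA f e f), <- (idem_comm He Hf), mulA, Hf, <- mulA, He; reflexivity.
Qed.

Lemma plus_idem x : mul0 (plus x) (plus x) = plus x.
Proof. exact (proj2 (proj1 (plus_spec x))). Qed.
Lemma star_idem x : mul0 (star x) (star x) = star x.
Proof. exact (proj2 (proj1 (star_spec x))). Qed.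

Lemma plus_mul_self x : mul0 (plus x) x = x.
Proof. exact (Rstar_idem_mul I (plus_idem x) (proj2 (plus_spec x))). Qed.
Lemma mul_star_self x : mul0 x (star x) = x.
Proof. exact (Lstar_idem_mul I (star_idem x) (proj2 (star_spec x))). Qed.

Lemma plus_unique x e : mul0 e e = e -> Rstar mul0 (full T0) x e -> e = plus x.
Proof.
  intros He H.
  apply (Rstar_idem_eq (A := full T0) I I He (plus_idem x) (idem_comm He (plus_idem x))).
  exact (Rstar_trans (Rstar_sym H) (proj2 (plus_spec x))).
Qed.
Lemma star_unique x f : mul0 f f = f -> Lstar mul0 (full T0) x f -> f = star x.
Proof.
  intros Hf H.
  apply (Lstar_idem_eq (A := full T0) I I Hf (star_idem x) (idem_comm Hf (star_idem x))).
  exact (Lstar_trans (Lstar_sym H) (proj2 (star_spec x))).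
Qed.

Lemma plus_idem_id e : mul0 e e = e -> plus e = e.
Proof. intros He; symmetry; exact (plus_unique He (Rstar_refl _ _ e)). Qed.
Lemma star_idem_id e : mul0 e e = e -> star e = e.
Proof. intros He; symmetry; exact (star_unique He (Lstar_refl _ _ e)). Qed.

Lemma plus_mul_le x y : mul0 (plus x) (plus (mul0 x y)) = plus (mul0 x y).
Proof.
  apply (proj2 (plus_spec (mul0 x y)) (Some (plus x)) None I I); simpl.
  rewrite <- mulA, plus_mul_self; reflexivity.
Qed.
Lemma star_mul_le x y : mul0 (star (mul0 x y)) (star y) = star (mul0 x y).
Proof.
  apply (proj2 (star_spec (mul0 x y)) (Some (star y)) None I I); simpl.
  rewrite mulA, mul_star_self; reflexivity.
Qed.

Lemma plus_lact_Rstar u x y :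
  Rstar mul0 (full T0) x y -> plus (lact mul0 u x) = plus (lact mul0 u y).
Proof.
  intros H; apply plus_unique; [apply plus_idem|].
  apply Rstar_trans with (lact mul0 u x); [|apply plus_spec].
  destruct u as [z|]; simpl; apply Rstar_sym; [|exact H].
  exact (Rstar_mull (A := full T0) (fun x y z _ _ _ => mulA x y z) (fun _ _ _ _ => I) z I I I H).
Qed.
Lemma star_ract_Lstar u x y :
  Lstar mul0 (full T0) x y -> star (ract mul0 x u) = star (ract mul0 y u).
Proof.
  intros H; apply star_unique; [apply star_idem|].
  apply Lstar_trans with (ract mul0 x u); [|apply star_spec].
  destruct u as [z|]; simpl; apply Lstar_sym; [|exact H].
  exact (Lstar_mulr (A := full T0) (fun x y z _ _ _ => mulA x y z) (fun _ _ _ _ => I) z I I I H).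
Qed.
End Adequate.

(** * Bands *)

Section Bands.
Variables (T : Type) (mul : T -> T -> T).
Hypothesis Hband : band mul.

Lemma band_mulA x y z : mul (mul x y) z = mul x (mul y z).
Proof. exact (proj2 (proj1 Hband) x y z I I I). Qed.
Lemma band_idem x : mul x x = x.
Proof. exact (proj2 Hband x). Qed.

Lemma band_GreenLP a b : GreenL mul (full T) a b <-> mul a b = a /\ mul b a = b.
Proof.
  split; [|intros [E1 E2]; exact (GreenL_of_mul mul (full T) I I E1 E2)].
  intros G; split.
  - exact (GreenL_idem_mul (fun x y z _ _ _ => band_mulA x y z) I (band_idem b) G).
  - exact (GreenL_idem_mul (fun x y z _ _ _ => band_mulA x y z) I (band_idem a) (GreenL_sym G)).
Qed.
Lemma band_GreenRP a b : GreenR mul (full T) a b <-> mul b a = a /\ mul a b = b.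
Proof.
  split; [|intros [E1 E2]; exact (GreenR_of_mul mul (full T) I I E1 E2)].
  intros G; split.
  - exact (GreenR_idem_mul (fun x y z _ _ _ => band_mulA x y z) I (band_idem b) G).
  - exact (GreenR_idem_mul (fun x y z _ _ _ => band_mulA x y z) I (band_idem a) (GreenR_sym G)).
Qed.
End Bands.

Lemma left_normal_mul_GreenL (T : Type) (mul : T -> T -> T) c a p :
  left_normal_band mul -> mul a p = a -> mul p a = p -> mul c a = mul c p.
Proof.
  intros [Hb Hln] E1 E2.
  rewrite <- E1 at 1; rewrite <- band_mulA, Hln, band_mulA, E2 by exact Hb; reflexivity.
Qed.
Lemma right_normal_mul_GreenR (T : Type) (mul : T -> T -> T) c a q :
  right_normal_band mul -> mul q a = a -> mul a q = q -> mul a c = mul q c.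
Proof. intros [_ Hrn] E1 E2; rewrite <- E1 at 1; rewrite Hrn, E2; reflexivity. Qed.

(** * The semigroup W *)

Section Construction.
Variables (T0 : Type) (mul0 : T0 -> T0 -> T0) (plus star : T0 -> T0).
Variables (TI : Type) (mulI : TI -> TI -> TI) (jI : T0 -> TI).
Variables (TL : Type) (mulL : TL -> TL -> TL) (jL : T0 -> TL).
Hypothesis adeq : adequate mul0 (full T0).
Hypothesis plus_spec :
  forall x, idem mul0 (full T0) (plus x) /\ Rstar mul0 (full T0) x (plus x).
Hypothesis star_spec :
  forall x, idem mul0 (full T0) (star x) /\ Lstar mul0 (full T0) x (star x).
Hypothesis HI : left_normal_band mulI.
Hypothesis HL : right_normal_band mulL.
Hypothesis jI_mul : forall e f, idem mul0 (full T0) e -> idem mul0 (full T0) f ->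
  jI (mul0 e f) = mulI (jI e) (jI f).
Hypothesis jL_mul : forall e f, idem mul0 (full T0) e -> idem mul0 (full T0) f ->
  jL (mul0 e f) = mulL (jL e) (jL f).

Let mul0A := adequate_mulA adeq.
Let mul0A_full (x y z : T0) (_ : full T0 x) (_ : full T0 y) (_ : full T0 z) := mul0A x y z.
Let idem_comm := adequate_idem_comm adeq.
Let plus_idem := plus_idem plus plus_spec.
Let star_idem := star_idem star star_spec.
Let plus_idem_id := plus_idem_id plus adeq plus_spec.
Let star_idem_id := star_idem_id star adeq star_spec.
Let mulIA := band_mulA (proj1 HI).
Let mulI_idem := band_idem (proj1 HI).
Let mulLA := band_mulA (proj1 HL).
Let mulL_idem := band_idem (proj1 HL).

Let jI_idem_mul e f (He : mul0 e e = e) (Hf : mul0 f f = f) :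
  jI (mul0 e f) = mulI (jI e) (jI f) := jI_mul (conj I He) (conj I Hf).
Let jL_idem_mul e f (He : mul0 e e = e) (Hf : mul0 f f = f) :
  jL (mul0 e f) = mulL (jL e) (jL f) := jL_mul (conj I He) (conj I Hf).
Let plus_mul_le := plus_mul_le plus adeq plus_spec.
Let star_mul_le := star_mul_le star adeq star_spec.
Let plus_mul_self := plus_mul_self plus plus_spec.
Let mul_star_self := mul_star_self star star_spec.
Let plus_lact := plus_lact_Rstar plus adeq plus_spec.
Let star_ract := star_ract_Lstar star adeq star_spec.

Local Notation W := (TI * T0 * TL)%type.
Local Notation Wc := (W_carrier plus star mulI jI mulL jL).
Local Notation Wm := (W_mul mul0 plus star mulI jI mulL jL).

Lemma W_carrierP e x f : Wc (e, x, f) <->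
  (mulI e (jI (plus x)) = e /\ mulI (jI (plus x)) e = jI (plus x)) /\
  (mulL (jL (star x)) f = f /\ mulL f (jL (star x)) = jL (star x)).
Proof. simpl; rewrite (band_GreenLP (proj1 HI)), (band_GreenRP (proj1 HL)); reflexivity. Qed.

Lemma W_carrier_mul w1 w2 : Wc w1 -> Wc w2 -> Wc (Wm w1 w2).
Proof.
  destruct w1 as [[e x] f], w2 as [[g y] h].
  intros [[A1 A2] _]%W_carrierP [_ [B1 B2]]%W_carrierP.
  apply W_carrierP; split; split; simpl.
  - rewrite mulIA, mulI_idem; reflexivity.
  - rewrite <- mulIA, (left_normal_mul_GreenL _ HI A1 A2), <- jI_idem_mul by apply plus_idem.
    rewrite (idem_comm (plus_idem _) (plus_idem x)), plus_mul_le; apply mulI_idem.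
  - rewrite <- mulLA, mulL_idem; reflexivity.
  - rewrite mulLA, (right_normal_mul_GreenR _ HL B1 B2), <- jL_idem_mul by apply star_idem.
    rewrite (idem_comm (star_idem y)), star_mul_le by apply star_idem; apply mulL_idem.
Qed.

Lemma W_mulA a b c : Wm (Wm a b) c = Wm a (Wm b c).
Proof.
  destruct a as [[e x] f], b as [[g y] h], c as [[k z] l]; simpl.
  rewrite mulIA, <- jI_idem_mul, plus_mul_le by apply plus_idem.
  rewrite <- mulLA, <- jL_idem_mul, star_mul_le, mul0A by apply star_idem.
  reflexivity.
Qed.

Definition mid (w : W) : T0 := snd (fst w).
Arguments mid w /.

Lemma mid_mul a b : mid (Wm a b) = mul0 (mid a) (mid b).
Proof. destruct a as [[e x] f], b as [[g y] h]; reflexivity. Qed.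
Lemma mid_lact u w : mid (lact Wm u w) = lact mul0 (option_map mid u) (mid w).
Proof. destruct u; [apply mid_mul | reflexivity]. Qed.
Lemma mid_ract w u : mid (ract Wm w u) = ract mul0 (mid w) (option_map mid u).
Proof. destruct u; [apply mid_mul | reflexivity]. Qed.

Lemma W_lact u e x f : Wc (e, x, f) ->
  let y := lact mul0 (option_map mid u) x in
  lact Wm u (e, x, f) =
  (mulI (match u with Some w => fst (fst w) | None => e end) (jI (plus y)), y,
   mulL (jL (star y)) f).
Proof.
  intros [[A1 _] [B1 _]]%W_carrierP.
  destruct u as [[[a z] b]|]; simpl; [reflexivity|]; rewrite A1, B1; reflexivity.
Qed.
Lemma W_ract u e x f : Wc (e, x, f) ->
  let y := ract mul0 x (option_map mid u) in
  ract Wm (e, x, f) u =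
  (mulI e (jI (plus y)), y,
   mulL (jL (star y)) (match u with Some w => snd w | None => f end)).
Proof.
  intros [[A1 _] [B1 _]]%W_carrierP.
  destruct u as [[[a z] b]|]; simpl; [reflexivity|]; rewrite A1, B1; reflexivity.
Qed.

Lemma W_carrier_plus e x f : Wc (e, x, f) -> Wc (e, plus x, jL (plus x)).
Proof.
  intros H%W_carrierP; apply W_carrierP.
  rewrite (plus_idem_id (plus_idem x)), (star_idem_id (plus_idem x)), mulL_idem; tauto.
Qed.
Lemma W_carrier_star e x f : Wc (e, x, f) -> Wc (jI (star x), star x, f).
Proof.
  intros H%W_carrierP; apply W_carrierP.
  rewrite (plus_idem_id (star_idem x)), (star_idem_id (star_idem x)), mulI_idem; tauto.
Qed.

Lemma W_idem_plus e x f : Wc (e, x, f) -> idem Wm Wc (e, plus x, jL (plus x)).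
Proof.
  intros H; split; [exact (W_carrier_plus H)|].
  apply W_carrierP in H as [[A1 _] _]; simpl.
  rewrite plus_idem, (plus_idem_id (plus_idem x)), (star_idem_id (plus_idem x)), mulL_idem, A1.
  reflexivity.
Qed.
Lemma W_idem_star e x f : Wc (e, x, f) -> idem Wm Wc (jI (star x), star x, f).
Proof.
  intros H; split; [exact (W_carrier_star H)|].
  apply W_carrierP in H as [_ [B1 _]]; simpl.
  rewrite star_idem, (plus_idem_id (star_idem x)), (star_idem_id (star_idem x)), mulI_idem, B1.
  reflexivity.
Qed.

Lemma W_Rstar_plus e x f : Wc (e, x, f) -> Rstar Wm Wc (e, x, f) (e, plus x, jL (plus x)).
Proof.
  intros H u v _ _; rewrite !W_lact by (exact H || exact (W_carrier_plus H)); cbv zeta.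
  pose proof (proj2 (plus_spec x)) as Rx.
  rewrite (plus_lact (option_map mid u) Rx), (plus_lact (option_map mid v) Rx).
  specialize (Rx (option_map mid u) (option_map mid v) (one_ok_full _) (one_ok_full _)).
  split; intros K; injection K as K1 K2 K3; apply Rx in K2; rewrite K1, K2; reflexivity.
Qed.
Lemma W_Lstar_star e x f : Wc (e, x, f) -> Lstar Wm Wc (e, x, f) (jI (star x), star x, f).
Proof.
  intros H u v _ _; rewrite !W_ract by (exact H || exact (W_carrier_star H)); cbv zeta.
  pose proof (proj2 (star_spec x)) as Lx.
  rewrite (star_ract (option_map mid u) Lx), (star_ract (option_map mid v) Lx).
  specialize (Lx (option_map mid u) (option_map mid v) (one_ok_full _) (one_ok_full _)).
  split; intros K; injection K as K1 K2 K3; apply Lx in K2;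
    rewrite K2 in *; rewrite K3; reflexivity.
Qed.

Lemma W_abundant : abundant Wm Wc.
Proof.
  split; [split; [exact W_carrier_mul | intros; apply W_mulA]|].
  intros [[e x] f] H; split.
  - exists (e, plus x, jL (plus x)); split; [exact (W_idem_plus H) | exact (W_Rstar_plus H)].
  - exists (jI (star x), star x, f); split; [exact (W_idem_star H) | exact (W_Lstar_star H)].
Qed.

Lemma W_idem_mid w : idem Wm Wc w -> mul0 (mid w) (mid w) = mid w.
Proof. intros [_ H]; rewrite <- mid_mul, H; reflexivity. Qed.

Lemma W_quasi_adequate : quasi_adequate Wm Wc.
Proof.
  split; [exact W_abundant|].
  intros w1 w2 H1 H2; split; [apply W_carrier_mul; [exact (proj1 H1) | exact (proj1 H2)]|].
  pose proof (W_idem_mid H1) as M1; pose proof (W_idem_mid H2) as M2.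
  destruct w1 as [[e x] f], w2 as [[g y] h]; simpl in M1, M2 |- *.
  rewrite (adequate_mul_idem adeq M1 M2), mulIA, mulI_idem, <- mulLA, mulL_idem.
  reflexivity.
Qed.

Definition emb (x : T0) : W := (jI (plus x), x, jL (star x)).
Definition W0 (w : W) : Prop := w = emb (mid w).

Lemma emb_W0 x : W0 (emb x).
Proof. reflexivity. Qed.
Lemma emb_W_carrier x : Wc (emb x).
Proof. split; [apply GreenL_refl | apply GreenR_refl]. Qed.
Lemma W0_W_carrier w : W0 w -> Wc w.
Proof. intros ->; apply emb_W_carrier. Qed.

Lemma emb_mul x y : Wm (emb x) (emb y) = emb (mul0 x y).
Proof.
  unfold emb; simpl.
  rewrite <- jI_idem_mul, <- jL_idem_mul, plus_mul_le, star_mul_le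
    by first [apply plus_idem | apply star_idem].
  reflexivity.
Qed.
Lemma emb_inj x y : emb x = emb y -> x = y.
Proof. intros H; injection H; auto. Qed.

Lemma emb_plus x : emb (plus x) = (jI (plus x), plus x, jL (plus x)).
Proof.
  unfold emb; rewrite (plus_idem_id (plus_idem x)), (star_idem_id (plus_idem x)); reflexivity.
Qed.
Lemma emb_star x : emb (star x) = (jI (star x), star x, jL (star x)).
Proof.
  unfold emb; rewrite (plus_idem_id (star_idem x)), (star_idem_id (star_idem x)); reflexivity.
Qed.

Lemma emb_idem x : mul0 x x = x -> idem Wm W0 (emb x).
Proof. intros H; split; [apply emb_W0 | rewrite emb_mul, H; reflexivity]. Qed.

Lemma W0_Rstar_plus x : Rstar Wm W0 (emb x) (emb (plus x)).
Proof.
  apply Rstar_sub with Wc; [exact W0_W_carrier|].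
  rewrite emb_plus; exact (W_Rstar_plus (emb_W_carrier x)).
Qed.
Lemma W0_Lstar_star x : Lstar Wm W0 (emb x) (emb (star x)).
Proof.
  apply Lstar_sub with Wc; [exact W0_W_carrier|].
  rewrite emb_star; exact (W_Lstar_star (emb_W_carrier x)).
Qed.

Lemma W0_idem_comm e f : idem Wm W0 e -> idem Wm W0 f -> Wm e f = Wm f e.
Proof.
  intros [He E1] [Hf E2]; rewrite He, Hf in *; rewrite !emb_mul in *.
  apply emb_inj in E1; apply emb_inj in E2; rewrite idem_comm by assumption; reflexivity.
Qed.

Lemma W0_adequate : adequate Wm W0.
Proof.
  split; [split; [split|]|].
  - intros a b -> ->; rewrite emb_mul; apply emb_W0.
  - intros; apply W_mulA.
  - intros a ->; split.
    + exists (emb (plus (mid a))); split; [apply emb_idem, plus_idem | apply W0_Rstar_plus].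
    + exists (emb (star (mid a))); split; [apply emb_idem, star_idem | apply W0_Lstar_star].
  - exact W0_idem_comm.
Qed.

Lemma lact_emb u x : lact Wm (option_map emb u) (emb x) = emb (lact mul0 u x).
Proof. destruct u; [apply emb_mul | reflexivity]. Qed.
Lemma ract_emb u x : ract Wm (emb x) (option_map emb u) = emb (ract mul0 x u).
Proof. destruct u; [apply emb_mul | reflexivity]. Qed.

Lemma W0_Rstar_emb x y : Rstar Wm W0 (emb x) (emb y) -> Rstar mul0 (full T0) x y.
Proof.
  intros H u v _ _.
  pose proof (H (option_map emb u) (option_map emb v)
    (one_ok_map (fun x _ => emb_W0 x) (one_ok_full u))
    (one_ok_map (fun x _ => emb_W0 x) (one_ok_full v))) as K.
  rewrite !lact_emb in K; split; intros E.
  - apply emb_inj, K; rewrite E; reflexivity.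
  - apply emb_inj, K; rewrite E; reflexivity.
Qed.
Lemma W0_Lstar_emb x y : Lstar Wm W0 (emb x) (emb y) -> Lstar mul0 (full T0) x y.
Proof.
  intros H u v _ _.
  pose proof (H (option_map emb u) (option_map emb v)
    (one_ok_map (fun x _ => emb_W0 x) (one_ok_full u))
    (one_ok_map (fun x _ => emb_W0 x) (one_ok_full v))) as K.
  rewrite !ract_emb in K; split; intros E.
  - apply emb_inj, K; rewrite E; reflexivity.
  - apply emb_inj, K; rewrite E; reflexivity.
Qed.

Lemma W0_Rstar_W x y : Rstar Wm W0 (emb x) (emb y) -> Rstar Wm Wc (emb x) (emb y).
Proof.
  intros H%W0_Rstar_emb u v _ _; unfold emb.
  rewrite !W_lact by apply emb_W_carrier; cbv zeta.
  rewrite (plus_lact (option_map mid u) H), (plus_lact (option_map mid v) H),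
    (plus_lact None H : plus x = plus y).
  specialize (H (option_map mid u) (option_map mid v) (one_ok_full _) (one_ok_full _)).
  split; intros K; injection K as K1 K2 K3; apply H in K2; rewrite K1, K2; reflexivity.
Qed.
Lemma W0_Lstar_W x y : Lstar Wm W0 (emb x) (emb y) -> Lstar Wm Wc (emb x) (emb y).
Proof.
  intros H%W0_Lstar_emb u v _ _; unfold emb.
  rewrite !W_ract by apply emb_W_carrier; cbv zeta.
  rewrite (star_ract (option_map mid u) H), (star_ract (option_map mid v) H),
    (star_ract None H : star x = star y).
  specialize (H (option_map mid u) (option_map mid v) (one_ok_full _) (one_ok_full _)).
  split; intros K; injection K as K1 K2 K3; apply H in K2; rewrite K3, K2; reflexivity.
Qed.

Lemma W0_star_subsemigroup : star_subsemigroup Wm Wc W0.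
Proof.
  split; [exact W0_W_carrier|]; split; [exact (proj1 W0_adequate)|].
  intros a b -> ->; split; split.
  - apply W0_Lstar_W.
  - apply Lstar_sub, W0_W_carrier.
  - apply W0_Rstar_W.
  - apply Rstar_sub, W0_W_carrier.
Qed.

Lemma mid_GreenL a b : GreenL Wm Wc a b -> GreenL mul0 (full T0) (mid a) (mid b).
Proof.
  intros [u [v [_ [_ [E1 E2]]]]]; exists (option_map mid u), (option_map mid v).
  repeat split; try apply one_ok_full; rewrite <- mid_lact; congruence.
Qed.
Lemma mid_GreenR a b : GreenR Wm Wc a b -> GreenR mul0 (full T0) (mid a) (mid b).
Proof.
  intros [u [v [_ [_ [E1 E2]]]]]; exists (option_map mid u), (option_map mid v).
  repeat split; try apply one_ok_full; rewrite <- mid_ract; congruence.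
Qed.

Lemma bar_W_mid w : Wc w -> bar_rel Wm Wc W0 w (emb (mid w)).
Proof.
  destruct w as [[e x] f]; intros H; split; [apply emb_W0|].
  pose proof H as [[A1 A2] [B1 B2]]%W_carrierP.
  exists (e, plus x, jL (plus x)), (jI (star x), star x, f).
  split; [exact (W_idem_plus H)|]; split; [exact (W_idem_star H)|].
  split; [|split].
  - simpl; rewrite plus_mul_self, mul_star_self, A1, A1, B1; reflexivity.
  - exists (emb (plus x)); split; [apply emb_idem, plus_idem|]; split; [apply W0_Rstar_plus|].
    rewrite emb_plus; apply GreenL_of_mul.
    + exact (W_carrier_plus H).
    + rewrite <- emb_plus; apply emb_W_carrier.
    + simpl; rewrite plus_idem, (plus_idem_id (plus_idem x)), (star_idem_id (plus_idem x)),
        mulL_idem, A1; reflexivity.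
    + simpl; rewrite plus_idem, (plus_idem_id (plus_idem x)), (star_idem_id (plus_idem x)),
        mulL_idem, mulI_idem; reflexivity.
  - exists (emb (star x)); split; [apply emb_idem, star_idem|]; split; [apply W0_Lstar_star|].
    rewrite emb_star; apply GreenR_of_mul.
    + exact (W_carrier_star H).
    + rewrite <- emb_star; apply emb_W_carrier.
    + simpl; rewrite star_idem, (plus_idem_id (star_idem x)), (star_idem_id (star_idem x)),
        mulI_idem, B1; reflexivity.
    + simpl; rewrite star_idem, (plus_idem_id (star_idem x)), (star_idem_id (star_idem x)),
        mulL_idem, mulI_idem; reflexivity.
Qed.

Lemma W0_Rstar_idem_eq y p : idem Wm W0 p -> Rstar Wm W0 (emb y) p -> p = emb (plus y).
Proof.
  intros Hp R; pose proof (emb_idem (plus_idem y)) as Hy.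
  apply (Rstar_idem_eq (proj1 Hp) (proj1 Hy) (proj2 Hp) (proj2 Hy) (W0_idem_comm Hp Hy)).
  exact (Rstar_trans (Rstar_sym R) (W0_Rstar_plus y)).
Qed.
Lemma W0_Lstar_idem_eq y q : idem Wm W0 q -> Lstar Wm W0 (emb y) q -> q = emb (star y).
Proof.
  intros Hq L; pose proof (emb_idem (star_idem y)) as Hy.
  apply (Lstar_idem_eq (proj1 Hq) (proj1 Hy) (proj2 Hq) (proj2 Hy) (W0_idem_comm Hq Hy)).
  exact (Lstar_trans (Lstar_sym L) (W0_Lstar_star y)).
Qed.

Lemma bar_W_unique w xb : bar_rel Wm Wc W0 w xb -> xb = emb (mid w).
Proof.
  intros [Hxb [E [F [HE [HF [Hw [[p [Hp [Rp Gp]]] [q [Hq [Lq Gq]]]]]]]]]].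
  rewrite Hxb in *; set (y := mid xb) in *; clearbody y.
  rewrite (W0_Rstar_idem_eq Hp Rp) in Gp; rewrite (W0_Lstar_idem_eq Hq Lq) in Gq.
  apply mid_GreenL in Gp; apply mid_GreenR in Gq.
  assert (ME : mid E = plus y).
  { apply (GreenL_idem_eq mul0A_full I I (W_idem_mid HE) (plus_idem y));
      [apply idem_comm; [exact (W_idem_mid HE) | apply plus_idem] | exact Gp]. }
  assert (MF : mid F = star y).
  { apply (GreenR_idem_eq mul0A_full I I (W_idem_mid HF) (star_idem y));
      [apply idem_comm; [exact (W_idem_mid HF) | apply star_idem] | exact Gq]. }
  rewrite Hw, !mid_mul, ME, MF; simpl.
  rewrite plus_mul_self, mul_star_self; reflexivity.
Qed.

Lemma W0_transversal : adequate_transversal Wm Wc W0.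
Proof.
  split; [exact W0_adequate|]; split; [exact W0_star_subsemigroup|].
  intros w Hw; exists (emb (mid w)); split; [exact (bar_W_mid w Hw)|].
  intros xb H; symmetry; exact (bar_W_unique H).
Qed.

Lemma W0_quasi_ideal : quasi_ideal Wm Wc W0.
Proof.
  intros a [[g z] h] b Ha _ Hb; rewrite Ha, Hb; unfold W0, emb; simpl.
  rewrite <- jI_idem_mul, plus_mul_le, <- jI_idem_mul, plus_mul_le, <- jL_idem_mul,
    star_mul_le by first [apply plus_idem | apply star_idem].
  reflexivity.
Qed.

Lemma W0_admissible : admissible Wm Wc W0.
Proof.
  intros x y xb yb Hx Hy H1 H2.
  rewrite (bar_W_unique H1), (bar_W_unique H2), emb_mul, <- mid_mul.
  apply bar_W_mid, W_carrier_mul; assumption.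
Qed.

Lemma W0_iso : iso mul0 (full T0) Wm W0.
Proof.
  exists emb; split; [|split; [|split]].
  - intros x _; apply emb_W0.
  - intros x y _ _; apply emb_inj.
  - intros w Hw; exists (mid w); split; [exact I | symmetry; exact Hw].
  - intros x y _ _; symmetry; apply emb_mul.
Qed.

Lemma W_construction : quasi_adequate Wm Wc /\ exists U : W -> Prop,
  adequate_transversal Wm Wc U /\ quasi_ideal Wm Wc U /\ admissible Wm Wc U /\
  iso mul0 (full T0) Wm U.
Proof.
  split; [exact W_quasi_adequate|].
  exists W0; split; [|split; [|split]];
    [exact W0_transversal | exact W0_quasi_ideal | exact W0_admissible | exact W0_iso].
Qed.
End Construction.

(** * The converse *)

Lemma val_inj (X : Type) (P : X -> Prop) (a b : sig P) : proj1_sig a = proj1_sig b -> a = b.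
Proof. exact (eq_sig_hprop (fun x => proof_irrelevance (P x)) a b). Qed.

Section Converse.
Variables (T : Type) (mul : T -> T -> T) (U : T -> Prop).
Hypothesis HQ : quasi_adequate mul (full T).
Hypothesis HT : adequate_transversal mul (full T) U.
Hypothesis HQI : quasi_ideal mul (full T) U.
Hypothesis HAd : admissible mul (full T) U.
Local Notation S := (full T).

Let mulA x y z : mul (mul x y) z = mul x (mul y z) := proj2 (proj1 (proj1 HQ)) x y z I I I.
Let mulA_S (x y z : T) (_ : S x) (_ : S y) (_ : S z) := mulA x y z.
Let mulA_U (x y z : T) (_ : U x) (_ : U y) (_ : U z) := mulA x y z.
Let lact_mulS u a b : lact mul u (mul a b) = mul (lact mul u a) b :=
  lact_mul mul S mulA_S u a b (one_ok_full u) I I.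
Let ract_mulS u a b : ract mul (mul a b) u = mul a (ract mul b u) :=
  ract_mul mul S mulA_S u a b (one_ok_full u) I I.

Lemma idem_mul_idem e f : mul e e = e -> mul f f = f -> mul (mul e f) (mul e f) = mul e f.
Proof. intros He Hf; exact (proj2 (proj2 HQ e f (conj I He) (conj I Hf))). Qed.

Lemma U_mul x y : U x -> U y -> U (mul x y).
Proof. exact (proj1 (proj1 (proj1 (proj1 HT))) x y). Qed.
Lemma U_idem_comm e f : U e -> U f -> mul e e = e -> mul f f = f -> mul e f = mul f e.
Proof. intros; apply (proj2 (proj1 HT)); split; assumption. Qed.
Lemma U_abundant a : U a ->
  (exists e, idem mul U e /\ Rstar mul U a e) /\ (exists f, idem mul U f /\ Lstar mul U a f).
Proof. exact (proj2 (proj1 (proj1 HT)) a). Qed.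
Lemma Rstar_U_S a b : U a -> U b -> Rstar mul U a b -> Rstar mul S a b.
Proof. intros Ha Hb; exact (proj1 (proj2 (proj2 (proj2 (proj1 (proj2 HT))) a b Ha Hb))). Qed.
Lemma Lstar_U_S a b : U a -> U b -> Lstar mul U a b -> Lstar mul S a b.
Proof. intros Ha Hb; exact (proj1 (proj1 (proj2 (proj2 (proj1 (proj2 HT))) a b Ha Hb))). Qed.
Lemma bar_exists x : exists xb, bar_rel mul S U x xb.
Proof. destruct (proj2 (proj2 HT) x I) as [xb [Hx _]]; exists xb; exact Hx. Qed.
Lemma bar_unique x a b : bar_rel mul S U x a -> bar_rel mul S U x b -> a = b.
Proof.
  destruct (proj2 (proj2 HT) x I) as [xb [_ Hu]]; intros Ha Hb.
  rewrite <- (Hu a Ha), <- (Hu b Hb); reflexivity.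
Qed.

Definition S0 : Type := sig U.
Definition S0_mul (a b : S0) : S0 :=
  exist U (mul (proj1_sig a) (proj1_sig b)) (U_mul (proj2_sig a) (proj2_sig b)).

Definition S0_plus (a : S0) : S0 :=
  let e := constructive_indefinite_description _ (proj1 (U_abundant (proj2_sig a))) in
  exist U (proj1_sig e) (proj1 (proj1 (proj2_sig e))).
Definition S0_star (a : S0) : S0 :=
  let f := constructive_indefinite_description _ (proj2 (U_abundant (proj2_sig a))) in
  exist U (proj1_sig f) (proj1 (proj1 (proj2_sig f))).

Arguments S0_plus : simpl never.
Arguments S0_star : simpl never.

Lemma S0_plus_val a : idem mul U (proj1_sig (S0_plus a)) /\
  Rstar mul U (proj1_sig a) (proj1_sig (S0_plus a)).
Proof.
  unfold S0_plus; simpl; destruct (constructive_indefinite_description _ _) as [e He]; exact He.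
Qed.
Lemma S0_star_val a : idem mul U (proj1_sig (S0_star a)) /\
  Lstar mul U (proj1_sig a) (proj1_sig (S0_star a)).
Proof.
  unfold S0_star; simpl; destruct (constructive_indefinite_description _ _) as [f Hf]; exact Hf.
Qed.

Lemma S0_lift (u : option T) :
  one_ok U u -> exists w : option S0, u = option_map (@proj1_sig _ _) w.
Proof.
  destruct u as [x|]; simpl; intros H; [exists (Some (exist U x H)) | exists None]; reflexivity.
Qed.
Lemma S0_lact w a :
  proj1_sig (lact S0_mul w a) = lact mul (option_map (@proj1_sig _ _) w) (proj1_sig a).
Proof. destruct w; reflexivity. Qed.
Lemma S0_ract w a :
  proj1_sig (ract S0_mul a w) = ract mul (proj1_sig a) (option_map (@proj1_sig _ _) w).
Proof. destruct w; reflexivity. Qed.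

Lemma S0_eqE (a b : S0) : a = b <-> proj1_sig a = proj1_sig b.
Proof. split; [intros ->; reflexivity | apply val_inj]. Qed.

Lemma S0_RstarE a b : Rstar S0_mul (full S0) a b <-> Rstar mul U (proj1_sig a) (proj1_sig b).
Proof.
  split.
  - intros H u v Hu Hv; destruct (S0_lift u Hu) as [w ->], (S0_lift v Hv) as [w' ->].
    pose proof (H w w' (one_ok_full w) (one_ok_full w')) as K.
    rewrite !S0_eqE, !S0_lact in K; exact K.
  - intros H w w' _ _; rewrite !S0_eqE, !S0_lact.
    apply H; (apply (one_ok_map (A := full S0)); [intros [x Hx] _; exact Hx | apply one_ok_full]).
Qed.
Lemma S0_LstarE a b : Lstar S0_mul (full S0) a b <-> Lstar mul U (proj1_sig a) (proj1_sig b).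
Proof.
  split.
  - intros H u v Hu Hv; destruct (S0_lift u Hu) as [w ->], (S0_lift v Hv) as [w' ->].
    pose proof (H w w' (one_ok_full w) (one_ok_full w')) as K.
    rewrite !S0_eqE, !S0_ract in K; exact K.
  - intros H w w' _ _; rewrite !S0_eqE, !S0_ract.
    apply H; (apply (one_ok_map (A := full S0)); [intros [x Hx] _; exact Hx | apply one_ok_full]).
Qed.

Lemma S0_plus_spec x : idem S0_mul (full S0) (S0_plus x) /\ Rstar S0_mul (full S0) x (S0_plus x).
Proof.
  destruct (S0_plus_val x) as [[_ H1] H2].
  split; [split; [exact I | apply val_inj, H1] | apply S0_RstarE, H2].
Qed.
Lemma S0_star_spec x : idem S0_mul (full S0) (S0_star x) /\ Lstar S0_mul (full S0) x (S0_star x).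
Proof.
  destruct (S0_star_val x) as [[_ H1] H2].
  split; [split; [exact I | apply val_inj, H1] | apply S0_LstarE, H2].
Qed.

Lemma S0_adequate : adequate S0_mul (full S0).
Proof.
  split; [split; [split|]|].
  - intros; exact I.
  - intros; apply val_inj, mulA.
  - intros a _; split.
    + exists (S0_plus a); apply S0_plus_spec.
    + exists (S0_star a); apply S0_star_spec.
  - intros [e Ue] [f Uf] [_ He] [_ Hf]; apply val_inj; simpl.
    apply U_idem_comm; [exact Ue | exact Uf | exact (f_equal (@proj1_sig _ _) He)
      | exact (f_equal (@proj1_sig _ _) Hf)].
Qed.

Let S0_plus_mul_le := plus_mul_le S0_plus S0_adequate S0_plus_spec.
Let S0_star_mul_le := star_mul_le S0_star S0_adequate S0_star_spec.
Let S0_plus_idem_id := plus_idem_id S0_plus S0_adequate S0_plus_spec.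
Let S0_star_idem_id := star_idem_id S0_star S0_adequate S0_star_spec.

Lemma bar_U a : U a -> bar_rel mul S U a a.
Proof.
  intros Ha; destruct (U_abundant Ha) as [[p [[Up Hp] Rp]] [q [[Uq Hq] Lq]]].
  split; [exact Ha|]; exists p, q.
  split; [split; [exact I | exact Hp]|]; split; [split; [exact I | exact Hq]|].
  split; [|split].
  - rewrite (Rstar_idem_mul Up Hp Rp), (Lstar_idem_mul Uq Hq Lq); reflexivity.
  - exists p; split; [split; assumption|]; split; [exact Rp | apply GreenL_refl].
  - exists q; split; [split; assumption|]; split; [exact Lq | apply GreenR_refl].
Qed.

(* By admissibility, e = e p and p = p e give ē = ē p and p = p ē for the bar ē
   of e, and ē, p are commuting idempotents of U. *)
Lemma bar_GreenL_idem e p : mul e e = e -> U p -> mul p p = p -> GreenL mul S e p ->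
  bar_rel mul S U e p.
Proof.
  intros He Up Hp G.
  pose proof (GreenL_idem_mul mulA_S I Hp G) as Eep.
  pose proof (GreenL_idem_mul mulA_S I He (GreenL_sym G)) as Epe.
  destruct (bar_exists e) as [eb Heb]; pose proof (bar_U Up) as Bp.
  assert (Ueb : U eb) by exact (proj1 Heb).
  assert (E1 : eb = mul eb p).
  { apply (bar_unique Heb); rewrite <- Eep at 1; exact (HAd I I Heb Bp). }
  assert (E2 : p = mul p eb).
  { apply (bar_unique Bp); rewrite <- Epe at 1; exact (HAd I I Bp Heb). }
  assert (Hebb : mul eb eb = eb).
  { symmetry; apply (bar_unique Heb); rewrite <- He at 1; exact (HAd I I Heb Heb). }
  replace p with eb; [exact Heb|].
  rewrite E1, (U_idem_comm Ueb Up Hebb Hp); symmetry; exact E2.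
Qed.
Lemma bar_GreenR_idem f q : mul f f = f -> U q -> mul q q = q -> GreenR mul S f q ->
  bar_rel mul S U f q.
Proof.
  intros Hf Uq Hq G.
  pose proof (GreenR_idem_mul mulA_S I Hq G) as Eqf.
  pose proof (GreenR_idem_mul mulA_S I Hf (GreenR_sym G)) as Efq.
  destruct (bar_exists f) as [fb Hfb]; pose proof (bar_U Uq) as Bq.
  assert (Ufb : U fb) by exact (proj1 Hfb).
  assert (E1 : fb = mul q fb).
  { apply (bar_unique Hfb); rewrite <- Eqf at 1; exact (HAd I I Bq Hfb). }
  assert (E2 : q = mul fb q).
  { apply (bar_unique Bq); rewrite <- Efq at 1; exact (HAd I I Hfb Bq). }
  assert (Hfbb : mul fb fb = fb).
  { symmetry; apply (bar_unique Hfb); rewrite <- Hf at 1; exact (HAd I I Hfb Hfb). }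
  replace q with fb; [exact Hfb|].
  rewrite E1, (U_idem_comm Uq Ufb Hq Hfbb); symmetry; exact E2.
Qed.

(* The data of [bar_rel mul S U x (proj1_sig z)], with the idempotents of U that are
   R*- and L*-related to z normalised to the chosen ones. *)
Definition decomp (x : T) (z : S0) (e f : T) : Prop :=
  mul e e = e /\ mul f f = f /\ x = mul (mul e (proj1_sig z)) f /\
  GreenL mul S e (proj1_sig (S0_plus z)) /\ GreenR mul S f (proj1_sig (S0_star z)).

Lemma decomp_bar x z e f : decomp x z e f -> bar_rel mul S U x (proj1_sig z).
Proof.
  intros [He [Hf [Hx [Ge Gf]]]]; split; [exact (proj2_sig z)|].
  exists e, f; split; [split; [exact I | exact He]|]; split; [split; [exact I | exact Hf]|].
  split; [exact Hx|]; split.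
  - exists (proj1_sig (S0_plus z)); destruct (S0_plus_val z); auto.
  - exists (proj1_sig (S0_star z)); destruct (S0_star_val z); auto.
Qed.
Lemma decomp_Rstar x z e f : decomp x z e f -> Rstar mul S x e.
Proof.
  intros [_ [Hf [Hx [Gp Gq]]]] u v _ _.
  destruct (S0_plus_val z) as [[Up Hp] Rp], (S0_star_val z) as [[Uq Hq] Lq].
  pose proof (GreenL_idem_mul mulA_S I Hp Gp) as Eep.
  pose proof (GreenR_idem_mul mulA_S I Hf (GreenR_sym Gq)) as Efq.
  assert (Exq : mul x (proj1_sig (S0_star z)) = mul e (proj1_sig z)).
  { rewrite Hx, mulA, Efq, mulA, (Lstar_idem_mul Uq Hq Lq); reflexivity. }
  split; intros K.
  - assert (K2 : mul (lact mul u e) (proj1_sig z) = mul (lact mul v e) (proj1_sig z)).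
    { rewrite <- !lact_mulS, <- Exq, !lact_mulS, K; reflexivity. }
    apply (Rstar_U_S (proj2_sig z) Up Rp (Some (lact mul u e)) (Some (lact mul v e)) I I) in K2.
    cbn [lact] in K2; rewrite <- !lact_mulS, Eep in K2; exact K2.
  - rewrite Hx, !lact_mulS, K; reflexivity.
Qed.
Lemma decomp_Lstar x z e f : decomp x z e f -> Lstar mul S x f.
Proof.
  intros [He [_ [Hx [Gp Gq]]]] u v _ _.
  destruct (S0_plus_val z) as [[Up Hp] Rp], (S0_star_val z) as [[Uq Hq] Lq].
  pose proof (GreenR_idem_mul mulA_S I Hq Gq) as Eqf.
  pose proof (GreenL_idem_mul mulA_S I He (GreenL_sym Gp)) as Epe.
  assert (Epx : mul (proj1_sig (S0_plus z)) x = mul (proj1_sig z) f).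
  { rewrite Hx, <- !mulA, Epe, (Rstar_idem_mul Up Hp Rp); reflexivity. }
  split; intros K.
  - assert (K2 : mul (proj1_sig z) (ract mul f u) = mul (proj1_sig z) (ract mul f v)).
    { rewrite <- !ract_mulS, <- Epx, !ract_mulS, K; reflexivity. }
    apply (Lstar_U_S (proj2_sig z) Uq Lq (Some (ract mul f u)) (Some (ract mul f v)) I I) in K2.
    cbn [ract] in K2; rewrite <- !ract_mulS, Eqf in K2; exact K2.
  - rewrite Hx, !ract_mulS, K; reflexivity.
Qed.

Lemma decomp_unique x z e f z' e' f' : decomp x z e f -> decomp x z' e' f' ->
  z = z' /\ e = e' /\ f = f'.
Proof.
  intros D D'.
  assert (Ez : z = z') by exact (val_inj _ _ (bar_unique (decomp_bar D) (decomp_bar D'))).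
  subst z'; split; [reflexivity|].
  pose proof (Rstar_trans (Rstar_sym (decomp_Rstar D)) (decomp_Rstar D')) as R.
  pose proof (Lstar_trans (Lstar_sym (decomp_Lstar D)) (decomp_Lstar D')) as L.
  destruct D as [He [Hf [_ [Ge Gf]]]], D' as [He' [Hf' [_ [Ge' Gf']]]].
  split.
  - exact (Rstar_GreenL_idem_eq mulA_S I I I He He' (proj2 (proj1 (S0_plus_val z))) R Ge Ge').
  - exact (Lstar_GreenR_idem_eq mulA_S I I I Hf Hf' (proj2 (proj1 (S0_star_val z))) L Gf Gf').
Qed.

Lemma S0_plus_unique z p : U p -> mul p p = p -> Rstar mul U (proj1_sig z) p ->
  p = proj1_sig (S0_plus z).
Proof.
  intros Up Hp R; destruct (S0_plus_val z) as [[Up' Hp'] R'].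
  exact (Rstar_idem_eq Up Up' Hp Hp' (U_idem_comm Up Up' Hp Hp') (Rstar_trans (Rstar_sym R) R')).
Qed.
Lemma S0_star_unique z q : U q -> mul q q = q -> Lstar mul U (proj1_sig z) q ->
  q = proj1_sig (S0_star z).
Proof.
  intros Uq Hq L; destruct (S0_star_val z) as [[Uq' Hq'] L'].
  exact (Lstar_idem_eq Uq Uq' Hq Hq' (U_idem_comm Uq Uq' Hq Hq') (Lstar_trans (Lstar_sym L) L')).
Qed.

Lemma decomp_exists x : exists d : S0 * T * T, decomp x (fst (fst d)) (snd (fst d)) (snd d).
Proof.
  destruct (bar_exists x) as [xb [Uxb [e [f [[_ He] [[_ Hf] [Hx [[p [[Up Hp] [Rp Gp]]]
    [q [[Uq Hq] [Lq Gq]]]]]]]]]]].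
  exists (exist U xb Uxb, e, f); simpl.
  split; [exact He|]; split; [exact Hf|]; split; [exact Hx|]; split.
  - rewrite <- (S0_plus_unique (exist U xb Uxb) Up Hp Rp); exact Gp.
  - rewrite <- (S0_star_unique (exist U xb Uxb) Uq Hq Lq); exact Gq.
Qed.

Definition decomposition (x : T) : S0 * T * T :=
  proj1_sig (constructive_indefinite_description _ (decomp_exists x)).
Definition bar (x : T) : S0 := fst (fst (decomposition x)).
Definition lfactor (x : T) : T := snd (fst (decomposition x)).
Definition rfactor (x : T) : T := snd (decomposition x).

Lemma decomp_of x : decomp x (bar x) (lfactor x) (rfactor x).
Proof. exact (proj2_sig (constructive_indefinite_description _ (decomp_exists x))). Qed.

(* The middle factor x̄ f_x e_y ȳ lies in U (quasi-ideal), so it is its own bar;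
   admissibility computes that bar as x̄ x̄^* ȳ^+ ȳ = x̄ ȳ. *)
Lemma bar_mul_middle x y :
  mul (proj1_sig (bar x)) (mul (rfactor x) (mul (lfactor y) (proj1_sig (bar y)))) =
  mul (proj1_sig (bar x)) (proj1_sig (bar y)).
Proof.
  destruct (decomp_of x) as [_ [Hfx [_ [_ Gfx]]]], (decomp_of y) as [Hey [_ [_ [Gey _]]]].
  destruct (S0_star_val (bar x)) as [[Usx Hsx] Lsx], (S0_plus_val (bar y)) as [[Upy Hpy] Rpy].
  set (xb := proj1_sig (bar x)) in *; set (yb := proj1_sig (bar y)) in *.
  assert (Uxb : U xb) by exact (proj2_sig (bar x)).
  assert (Uyb : U yb) by exact (proj2_sig (bar y)).
  pose proof (HAd I I (HAd I I (bar_U Uxb) (HAd I I (bar_GreenR_idem Hfx Usx Hsx Gfx)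
    (bar_GreenL_idem Hey Upy Hpy Gey))) (bar_U Uyb)) as B.
  assert (Um : U (mul (mul xb (mul (rfactor x) (lfactor y))) yb)) by exact (HQI Uxb I Uyb).
  rewrite <- (mulA (rfactor x)), <- mulA, (bar_unique (bar_U Um) B), !mulA,
    (Rstar_idem_mul Upy Hpy Rpy), <- mulA, (Lstar_idem_mul Usx Hsx Lsx).
  reflexivity.
Qed.

Lemma decomp_mul x y : let m := S0_mul (bar x) (bar y) in
  decomp (mul x y) m (mul (lfactor x) (proj1_sig (S0_plus m)))
    (mul (proj1_sig (S0_star m)) (rfactor y)).
Proof.
  intros m.
  destruct (decomp_of x) as [Hex [Hfx [Ex [Gex Gfx]]]].
  destruct (decomp_of y) as [Hey [Hfy [Ey [Gey Gfy]]]].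
  destruct (S0_plus_val m) as [[Up Hp] Rp], (S0_star_val m) as [[Uq Hq] Lq].
  split; [exact (idem_mul_idem Hex Hp)|]; split; [exact (idem_mul_idem Hq Hfy)|].
  split; [|split].
  - rewrite Ex at 1; rewrite Ey at 1.
    rewrite (mulA (lfactor x) _ (proj1_sig m)), (Rstar_idem_mul Up Hp Rp),
      (mulA (lfactor x) (proj1_sig m)), <- (mulA (proj1_sig m)), (Lstar_idem_mul Uq Hq Lq).
    simpl; rewrite <- bar_mul_middle, !mulA; reflexivity.
  - pose proof (f_equal (@proj1_sig _ _) (S0_plus_mul_le (bar x) (bar y))) as P; fold m in P.
    rewrite <- P at 2; exact (GreenL_mulr mulA_S _ I I I Gex).
  - pose proof (f_equal (@proj1_sig _ _) (S0_star_mul_le (bar x) (bar y))) as P; fold m in P.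
    rewrite <- P at 2; exact (GreenR_mull mulA_S _ I I I Gfy).
Qed.

Definition in_Iband (e : T) : Prop :=
  mul e e = e /\ exists p, U p /\ mul p p = p /\ GreenL mul S e p.
Definition Iband : Type := sig in_Iband.
Definition Irep (a : Iband) : T :=
  proj1_sig (constructive_indefinite_description _ (proj2 (proj2_sig a))).

Lemma Irep_spec a : U (Irep a) /\ mul (Irep a) (Irep a) = Irep a /\
  GreenL mul S (proj1_sig a) (Irep a).
Proof. exact (proj2_sig (constructive_indefinite_description _ (proj2 (proj2_sig a)))). Qed.
Lemma Iband_idem (a : Iband) : mul (proj1_sig a) (proj1_sig a) = proj1_sig a.
Proof. exact (proj1 (proj2_sig a)). Qed.
Lemma Iband_mul_Irep a : mul (proj1_sig a) (Irep a) = proj1_sig a.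
Proof. destruct (Irep_spec a) as [_ [H G]]; exact (GreenL_idem_mul mulA_S I H G). Qed.
Lemma Irep_eq a p : U p -> mul p p = p -> GreenL mul S (proj1_sig a) p -> Irep a = p.
Proof.
  intros Up Hp G; destruct (Irep_spec a) as [Ua [Ha Ga]].
  exact (GreenL_idem_uniq mulA_S I I I (Iband_idem a) Ha Hp (U_idem_comm Ua Up Ha Hp) Ga G).
Qed.

Lemma Imul_in (a b : Iband) : in_Iband (mul (proj1_sig a) (Irep b)).
Proof.
  destruct (Irep_spec a) as [Ua [Ha Ga]], (Irep_spec b) as [Ub [Hb Gb]].
  split; [exact (idem_mul_idem (Iband_idem a) Hb)|].
  exists (mul (Irep a) (Irep b)); split; [exact (U_mul Ua Ub)|].
  split; [exact (idem_mul_idem Ha Hb) | exact (GreenL_mulr mulA_S _ I I I Ga)].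
Qed.
Definition Imul (a b : Iband) : Iband := exist in_Iband _ (Imul_in a b).

Lemma Irep_mul a b : Irep (Imul a b) = mul (Irep a) (Irep b).
Proof.
  destruct (Irep_spec a) as [Ua [Ha Ga]], (Irep_spec b) as [Ub [Hb Gb]].
  apply Irep_eq; [exact (U_mul Ua Ub) | exact (idem_mul_idem Ha Hb)|].
  exact (GreenL_mulr mulA_S _ I I I Ga).
Qed.

Lemma Iof_in (x : S0) : in_Iband (proj1_sig (S0_plus x)).
Proof.
  destruct (S0_plus_val x) as [[Up Hp] _]; split; [exact Hp|].
  exists (proj1_sig (S0_plus x)); split; [exact Up|]; split; [exact Hp | apply GreenL_refl].
Qed.
Definition Iof (x : S0) : Iband := exist in_Iband _ (Iof_in x).

Lemma Irep_Iof x : Irep (Iof x) = proj1_sig (S0_plus x).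
Proof.
  destruct (S0_plus_val x) as [[Up Hp] _]; exact (Irep_eq (Iof x) Up Hp (GreenL_refl mul S _)).
Qed.

Lemma Irep_comm a b : mul (Irep a) (Irep b) = mul (Irep b) (Irep a).
Proof.
  destruct (Irep_spec a) as [Ua [Ha _]], (Irep_spec b) as [Ub [Hb _]].
  exact (U_idem_comm Ua Ub Ha Hb).
Qed.

Lemma Iband_left_normal : left_normal_band Imul.
Proof.
  split; [split; [split|]|].
  - intros; exact I.
  - intros a b c _ _ _; apply val_inj; cbn [proj1_sig Imul Iof].
    rewrite Irep_mul, mulA; reflexivity.
  - intros a; apply val_inj; exact (Iband_mul_Irep a).
  - intros a b c; apply val_inj; cbn [proj1_sig Imul Iof]; rewrite !mulA, Irep_comm; reflexivity.
Qed.

Lemma Irep_lact u b : Irep (lact Imul u b) = lact mul (option_map Irep u) (Irep b).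
Proof. destruct u; [apply Irep_mul | reflexivity]. Qed.

Lemma Irep_one_ok u : one_ok U (option_map Irep u).
Proof. destruct u; [apply Irep_spec | exact I]. Qed.

Lemma Iband_GreenLE a b : GreenL Imul (full Iband) a b <-> Irep a = Irep b.
Proof.
  destruct (Irep_spec a) as [Ua [Ha _]], (Irep_spec b) as [Ub [Hb _]]; split.
  - intros [u [v [_ [_ [E1 E2]]]]].
    apply (GreenL_idem_eq mulA_U Ua Ub Ha Hb (Irep_comm a b)).
    exists (option_map Irep u), (option_map Irep v).
    split; [apply Irep_one_ok|]; split; [apply Irep_one_ok|].
    rewrite <- !Irep_lact, <- E1, <- E2; split; reflexivity.
  - intros E; apply GreenL_of_mul; try exact I; apply val_inj; cbn [proj1_sig Imul Iof].
    + rewrite <- E; apply Iband_mul_Irep.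
    + rewrite E; apply Iband_mul_Irep.
Qed.

Lemma Iof_mul e f : idem S0_mul (full S0) e -> idem S0_mul (full S0) f ->
  Iof (S0_mul e f) = Imul (Iof e) (Iof f).
Proof.
  intros [_ He] [_ Hf]; apply val_inj; cbn [proj1_sig Imul Iof]; rewrite Irep_Iof.
  rewrite (S0_plus_idem_id He), (S0_plus_idem_id Hf),
    (S0_plus_idem_id (adequate_mul_idem S0_adequate He Hf)); reflexivity.
Qed.
Lemma Iof_inj e f : idem S0_mul (full S0) e -> idem S0_mul (full S0) f -> Iof e = Iof f -> e = f.
Proof.
  intros [_ He] [_ Hf] E; apply (f_equal (@proj1_sig _ _)) in E; cbn [proj1_sig Imul Iof] in E.
  rewrite (S0_plus_idem_id He), (S0_plus_idem_id Hf) in E; apply val_inj, E.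
Qed.

Lemma Iband_rep_idem a : idem S0_mul (full S0) (exist U (Irep a) (proj1 (Irep_spec a))).
Proof. split; [exact I | apply val_inj; exact (proj1 (proj2 (Irep_spec a)))]. Qed.
Lemma Irep_Iof_rep a : Irep (Iof (exist U (Irep a) (proj1 (Irep_spec a)))) = Irep a.
Proof. rewrite Irep_Iof, (S0_plus_idem_id (proj2 (Iband_rep_idem a))); reflexivity. Qed.

Lemma Iband_transversal a : exists e, idem S0_mul (full S0) e /\ inverse Imul a (Iof e) /\
  forall e', idem S0_mul (full S0) e' -> inverse Imul a (Iof e') -> e' = e.
Proof.
  exists (exist U (Irep a) (proj1 (Irep_spec a))); split; [apply Iband_rep_idem|].
  pose proof (Irep_spec a) as [Ua [Ha Ga]]; split.
  - split; apply val_inj; cbn [proj1_sig Imul Iof]; rewrite !Irep_Iof_rep.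
    + rewrite Iband_mul_Irep; apply Iband_mul_Irep.
    + rewrite (S0_plus_idem_id (proj2 (Iband_rep_idem a))); cbn [proj1_sig Imul Iof].
      rewrite Ha, Ha; reflexivity.
  - intros e' [_ He'] [I1 I2]; apply val_inj; cbn [proj1_sig Imul Iof].
    apply (f_equal (@proj1_sig _ _)) in I1, I2; cbn [proj1_sig Imul Iof] in I1, I2.
    rewrite Irep_Iof, (S0_plus_idem_id He') in I1, I2.
    refine (GreenL_inverse_idem_eq mulA_S I I I (f_equal (@proj1_sig _ _) He') _ Ga I1 I2).
    apply U_idem_comm; [exact Ua | exact (proj2_sig e') | exact Ha
      | exact (f_equal (@proj1_sig _ _) He')].
Qed.

Lemma Iband_cover a : exists e, idem S0_mul (full S0) e /\ GreenL Imul (full Iband) a (Iof e).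
Proof.
  exists (exist U (Irep a) (proj1 (Irep_spec a))); split; [apply Iband_rep_idem|].
  apply Iband_GreenLE; rewrite Irep_Iof_rep; reflexivity.
Qed.

Definition in_Lband (f : T) : Prop :=
  mul f f = f /\ exists q, U q /\ mul q q = q /\ GreenR mul S f q.
Definition Lband : Type := sig in_Lband.
Definition Lrep (a : Lband) : T :=
  proj1_sig (constructive_indefinite_description _ (proj2 (proj2_sig a))).

Lemma Lrep_spec a : U (Lrep a) /\ mul (Lrep a) (Lrep a) = Lrep a /\
  GreenR mul S (proj1_sig a) (Lrep a).
Proof. exact (proj2_sig (constructive_indefinite_description _ (proj2 (proj2_sig a)))). Qed.
Lemma Lband_idem (a : Lband) : mul (proj1_sig a) (proj1_sig a) = proj1_sig a.
Proof. exact (proj1 (proj2_sig a)). Qed.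
Lemma Lrep_mul_Lband a : mul (Lrep a) (proj1_sig a) = proj1_sig a.
Proof. destruct (Lrep_spec a) as [_ [H G]]; exact (GreenR_idem_mul mulA_S I H G). Qed.
Lemma Lrep_eq a q : U q -> mul q q = q -> GreenR mul S (proj1_sig a) q -> Lrep a = q.
Proof.
  intros Uq Hq G; destruct (Lrep_spec a) as [Ua [Ha Ga]].
  exact (GreenR_idem_uniq mulA_S I I I (Lband_idem a) Ha Hq (U_idem_comm Ua Uq Ha Hq) Ga G).
Qed.
Lemma Lrep_comm a b : mul (Lrep a) (Lrep b) = mul (Lrep b) (Lrep a).
Proof.
  destruct (Lrep_spec a) as [Ua [Ha _]], (Lrep_spec b) as [Ub [Hb _]].
  exact (U_idem_comm Ua Ub Ha Hb).
Qed.

Lemma Lmul_in (a b : Lband) : in_Lband (mul (Lrep a) (proj1_sig b)).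
Proof.
  destruct (Lrep_spec a) as [Ua [Ha Ga]], (Lrep_spec b) as [Ub [Hb Gb]].
  split; [exact (idem_mul_idem Ha (Lband_idem b))|].
  exists (mul (Lrep a) (Lrep b)); split; [exact (U_mul Ua Ub)|].
  split; [exact (idem_mul_idem Ha Hb) | exact (GreenR_mull mulA_S _ I I I Gb)].
Qed.
Definition Lmul (a b : Lband) : Lband := exist in_Lband _ (Lmul_in a b).

Lemma Lrep_mul a b : Lrep (Lmul a b) = mul (Lrep a) (Lrep b).
Proof.
  destruct (Lrep_spec a) as [Ua [Ha Ga]], (Lrep_spec b) as [Ub [Hb Gb]].
  apply Lrep_eq; [exact (U_mul Ua Ub) | exact (idem_mul_idem Ha Hb)|].
  exact (GreenR_mull mulA_S _ I I I Gb).
Qed.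

Lemma Lof_in (x : S0) : in_Lband (proj1_sig (S0_star x)).
Proof.
  destruct (S0_star_val x) as [[Uq Hq] _]; split; [exact Hq|].
  exists (proj1_sig (S0_star x)); split; [exact Uq|]; split; [exact Hq | apply GreenR_refl].
Qed.
Definition Lof (x : S0) : Lband := exist in_Lband _ (Lof_in x).

Lemma Lrep_Lof x : Lrep (Lof x) = proj1_sig (S0_star x).
Proof.
  destruct (S0_star_val x) as [[Uq Hq] _]; exact (Lrep_eq (Lof x) Uq Hq (GreenR_refl mul S _)).
Qed.

Lemma Lband_right_normal : right_normal_band Lmul.
Proof.
  split; [split; [split|]|].
  - intros; exact I.
  - intros a b c _ _ _; apply val_inj; cbn [proj1_sig Lmul Lof].
    rewrite Lrep_mul, mulA; reflexivity.
  - intros a; apply val_inj; exact (Lrep_mul_Lband a).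
  - intros a b c; apply val_inj; cbn [proj1_sig Lmul Lof].
    rewrite !Lrep_mul, Lrep_comm; reflexivity.
Qed.

Lemma Lrep_ract u b : Lrep (ract Lmul b u) = ract mul (Lrep b) (option_map Lrep u).
Proof. destruct u; [apply Lrep_mul | reflexivity]. Qed.

Lemma Lrep_one_ok u : one_ok U (option_map Lrep u).
Proof. destruct u; [apply Lrep_spec | exact I]. Qed.

Lemma Lband_GreenRE a b : GreenR Lmul (full Lband) a b <-> Lrep a = Lrep b.
Proof.
  destruct (Lrep_spec a) as [Ua [Ha _]], (Lrep_spec b) as [Ub [Hb _]]; split.
  - intros [u [v [_ [_ [E1 E2]]]]].
    apply (GreenR_idem_eq mulA_U Ua Ub Ha Hb (Lrep_comm a b)).
    exists (option_map Lrep u), (option_map Lrep v).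
    split; [apply Lrep_one_ok|]; split; [apply Lrep_one_ok|].
    rewrite <- !Lrep_ract, <- E1, <- E2; split; reflexivity.
  - intros E; apply GreenR_of_mul; try exact I; apply val_inj; cbn [proj1_sig Lmul Lof].
    + rewrite <- E; apply Lrep_mul_Lband.
    + rewrite E; apply Lrep_mul_Lband.
Qed.

Lemma Lof_mul e f : idem S0_mul (full S0) e -> idem S0_mul (full S0) f ->
  Lof (S0_mul e f) = Lmul (Lof e) (Lof f).
Proof.
  intros [_ He] [_ Hf]; apply val_inj; cbn [proj1_sig Lmul Lof]; rewrite Lrep_Lof.
  rewrite (S0_star_idem_id He), (S0_star_idem_id Hf),
    (S0_star_idem_id (adequate_mul_idem S0_adequate He Hf)); reflexivity.
Qed.
Lemma Lof_inj e f : idem S0_mul (full S0) e -> idem S0_mul (full S0) f -> Lof e = Lof f -> e = f.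
Proof.
  intros [_ He] [_ Hf] E; apply (f_equal (@proj1_sig _ _)) in E; cbn [proj1_sig Lmul Lof] in E.
  rewrite (S0_star_idem_id He), (S0_star_idem_id Hf) in E; apply val_inj, E.
Qed.

Lemma Lband_rep_idem a : idem S0_mul (full S0) (exist U (Lrep a) (proj1 (Lrep_spec a))).
Proof. split; [exact I | apply val_inj; exact (proj1 (proj2 (Lrep_spec a)))]. Qed.
Lemma Lrep_Lof_rep a : Lrep (Lof (exist U (Lrep a) (proj1 (Lrep_spec a)))) = Lrep a.
Proof. rewrite Lrep_Lof, (S0_star_idem_id (proj2 (Lband_rep_idem a))); reflexivity. Qed.

Lemma Lband_transversal a : exists e, idem S0_mul (full S0) e /\ inverse Lmul a (Lof e) /\
  forall e', idem S0_mul (full S0) e' -> inverse Lmul a (Lof e') -> e' = e.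
Proof.
  exists (exist U (Lrep a) (proj1 (Lrep_spec a))); split; [apply Lband_rep_idem|].
  pose proof (Lrep_spec a) as [Ua [Ha Ga]]; split.
  - split; apply val_inj; cbn [proj1_sig Lmul Lof]; rewrite !Lrep_mul, !Lrep_Lof_rep.
    + rewrite Ha; apply Lrep_mul_Lband.
    + rewrite (S0_star_idem_id (proj2 (Lband_rep_idem a))); cbn [proj1_sig Lmul Lof].
      rewrite Ha, Ha; reflexivity.
  - intros e' [_ He'] [I1 I2]; apply val_inj; cbn [proj1_sig Lmul Lof].
    apply (f_equal (@proj1_sig _ _)) in I1, I2; cbn [proj1_sig Lmul Lof] in I1, I2.
    rewrite !Lrep_mul, Lrep_Lof, (S0_star_idem_id He') in I1, I2.
    refine (GreenR_inverse_idem_eq mulA_S I I I (f_equal (@proj1_sig _ _) He') _ Ga I1 I2).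
    apply U_idem_comm; [exact Ua | exact (proj2_sig e') | exact Ha
      | exact (f_equal (@proj1_sig _ _) He')].
Qed.

Lemma Lband_cover a : exists e, idem S0_mul (full S0) e /\ GreenR Lmul (full Lband) a (Lof e).
Proof.
  exists (exist U (Lrep a) (proj1 (Lrep_spec a))); split; [apply Lband_rep_idem|].
  apply Lband_GreenRE; rewrite Lrep_Lof_rep; reflexivity.
Qed.

Lemma W_hyp_converse : W_hyp S0_mul S0_plus S0_star Imul Iof Lmul Lof.
Proof.
  exact (conj S0_adequate (conj S0_plus_spec (conj S0_star_spec
    (conj Iband_left_normal (conj Lband_right_normal (conj Iof_mul (conj Iof_inj
    (conj Lof_mul (conj Lof_inj (conj Iband_transversal (conj Lband_transversal
    (conj Iband_cover Lband_cover)))))))))))).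
Qed.

Lemma lfactor_in x : in_Iband (lfactor x).
Proof.
  destruct (decomp_of x) as [He [_ [_ [G _]]]], (S0_plus_val (bar x)) as [[Up Hp] _].
  split; [exact He|]; exists (proj1_sig (S0_plus (bar x))); auto.
Qed.
Lemma rfactor_in x : in_Lband (rfactor x).
Proof.
  destruct (decomp_of x) as [_ [Hf [_ [_ G]]]], (S0_star_val (bar x)) as [[Uq Hq] _].
  split; [exact Hf|]; exists (proj1_sig (S0_star (bar x))); auto.
Qed.
Definition Ifactor (x : T) : Iband := exist in_Iband _ (lfactor_in x).
Definition Lfactor (x : T) : Lband := exist in_Lband _ (rfactor_in x).
Definition decompose (x : T) : Iband * S0 * Lband := (Ifactor x, bar x, Lfactor x).

Lemma Irep_Ifactor x : Irep (Ifactor x) = proj1_sig (S0_plus (bar x)).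
Proof.
  destruct (decomp_of x) as [_ [_ [_ [G _]]]], (S0_plus_val (bar x)) as [[Up Hp] _].
  exact (Irep_eq (Ifactor x) Up Hp G).
Qed.
Lemma Lrep_Lfactor x : Lrep (Lfactor x) = proj1_sig (S0_star (bar x)).
Proof.
  destruct (decomp_of x) as [_ [_ [_ [_ G]]]], (S0_star_val (bar x)) as [[Uq Hq] _].
  exact (Lrep_eq (Lfactor x) Uq Hq G).
Qed.
Lemma Irep_Iof_plus z : Irep (Iof (S0_plus z)) = proj1_sig (S0_plus z).
Proof. rewrite Irep_Iof, (S0_plus_idem_id (proj2 (proj1 (S0_plus_spec z)))); reflexivity. Qed.
Lemma Lrep_Lof_star z : Lrep (Lof (S0_star z)) = proj1_sig (S0_star z).
Proof. rewrite Lrep_Lof, (S0_star_idem_id (proj2 (proj1 (S0_star_spec z)))); reflexivity. Qed.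

Local Notation Wc := (W_carrier S0_plus S0_star Imul Iof Lmul Lof).
Local Notation Wm := (W_mul S0_mul S0_plus S0_star Imul Iof Lmul Lof).

Lemma decompose_W_carrier x : Wc (decompose x).
Proof.
  split.
  - apply Iband_GreenLE; rewrite Irep_Ifactor, Irep_Iof_plus; reflexivity.
  - apply Lband_GreenRE; rewrite Lrep_Lfactor, Lrep_Lof_star; reflexivity.
Qed.

Lemma decompose_inj x y : decompose x = decompose y -> x = y.
Proof.
  intros E; injection E as E1 E2 E3.
  destruct (decomp_of x) as [_ [_ [Ex _]]], (decomp_of y) as [_ [_ [Ey _]]].
  rewrite Ex, Ey, E1, E2, E3; reflexivity.
Qed.

Lemma decompose_onto w : Wc w -> exists x, decompose x = w.
Proof.
  destruct w as [[a z] b]; intros [Ga Gb].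
  apply Iband_GreenLE in Ga; apply Lband_GreenRE in Gb.
  rewrite Irep_Iof_plus in Ga; rewrite Lrep_Lof_star in Gb.
  set (x := mul (mul (proj1_sig a) (proj1_sig z)) (proj1_sig b)).
  assert (D : decomp x z (proj1_sig a) (proj1_sig b)).
  { split; [apply Iband_idem|]; split; [apply Lband_idem|]; split; [reflexivity|]; split.
    - rewrite <- Ga; apply Irep_spec.
    - rewrite <- Gb; apply Lrep_spec. }
  destruct (decomp_unique (decomp_of x) D) as [Ez [Ea Eb]].
  exists x; unfold decompose; rewrite Ez.
  f_equal; [f_equal|]; apply val_inj; assumption.
Qed.

Lemma decompose_mul x y : decompose (mul x y) = Wm (decompose x) (decompose y).
Proof.
  destruct (decomp_unique (decomp_of (mul x y)) (decomp_mul x y)) as [Ez [Ea Eb]].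
  unfold decompose; cbn [W_mul]; f_equal; [f_equal|].
  - apply val_inj; cbn [proj1_sig Imul Ifactor]; rewrite Irep_Iof_plus; exact Ea.
  - exact Ez.
  - apply val_inj; cbn [proj1_sig Lmul Lfactor]; rewrite Lrep_Lof_star; exact Eb.
Qed.

Lemma decompose_iso : iso mul S Wm Wc.
Proof.
  exists decompose; split; [|split; [|split]].
  - intros x _; apply decompose_W_carrier.
  - intros x y _ _; apply decompose_inj.
  - intros w Hw; destruct (decompose_onto w Hw) as [x Hx]; exists x; split; [exact I | exact Hx].
  - intros x y _ _; apply decompose_mul.
Qed.
End Converse.


Theorem corollary2p17 :
  (forall (T0 : Type) (mul0 : T0 -> T0 -> T0) (plus star : T0 -> T0)
     (TI : Type) (mulI : TI -> TI -> TI) (jI : T0 -> TI)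
     (TL : Type) (mulL : TL -> TL -> TL) (jL : T0 -> TL),
   W_hyp mul0 plus star mulI jI mulL jL ->
   let Wc := W_carrier plus star mulI jI mulL jL in
   let Wm := W_mul mul0 plus star mulI jI mulL jL in
   quasi_adequate Wm Wc /\
   exists U : TI * T0 * TL -> Prop,
     adequate_transversal Wm Wc U /\ quasi_ideal Wm Wc U /\ admissible Wm Wc U /\
     iso mul0 (full T0) Wm U)
  /\
  (forall (T : Type) (mul : T -> T -> T) (U : T -> Prop),
   quasi_adequate mul (full T) ->
   adequate_transversal mul (full T) U -> quasi_ideal mul (full T) U ->
   admissible mul (full T) U ->
   exists (T0 : Type) (mul0 : T0 -> T0 -> T0) (plus star : T0 -> T0)
     (TI : Type) (mulI : TI -> TI -> TI) (jI : T0 -> TI)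
     (TL : Type) (mulL : TL -> TL -> TL) (jL : T0 -> TL),
   W_hyp mul0 plus star mulI jI mulL jL /\
   iso mul (full T) (W_mul mul0 plus star mulI jI mulL jL)
       (W_carrier plus star mulI jI mulL jL)).
Proof.
  split.
  - intros T0 mul0 plus star TI mulI jI TL mulL jL
      [adeq [plus_spec [star_spec [HI [HL [jI_mul [_ [jL_mul _]]]]]]]].
    exact (W_construction plus star jI jL adeq plus_spec star_spec HI HL jI_mul jL_mul).
  - intros T mul U HQ HT HQI HAd.
    exists (S0 U), (S0_mul HT), (S0_plus HT), (S0_star HT), (Iband mul U), (Imul HQ HT), (Iof HT),
      (Lband mul U), (Lmul HQ HT), (Lof HT).
    exact (conj (W_hyp_converse HQ HT) (decompose_iso HQ HT HQI HAd)).
Qed.
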